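(* Let $\varrho=\{\varrho_{t,T}\}_{t\in[0,T]}$ be a dynamic risk measure which is stochastically conditionally time-consistent, normalized, and translation invariant. Then for every $0\le t\le r\le T$ and every history $\xi_{[0,t]}\in\Xi_{0,t}$ there exists a functional $\varsigma^{\xi_{[0,t]}}_{t,r}:\mathcal L_\infty(\Xi^{\xi_t}_{t,r},P^{\xi_t}_{t,r})\to\mathbb R$, law invariant with respect to $P^{\xi_t}_{t,r}$ (i.e. its value at a random variable depends only on the distribution of that random variable under $P^{\xi_t}_{t,r}$), such that for every $c\in\mathcal L_\infty([0,T]\times\mathcal X)$ and $f\in\mathcal L_\infty(\mathcal X)$ the random variable $Z_T=\int_0^T c_\tau(X_\tau)\,d\tau+f(X_T)$ satisfies \[ \varrho_{t,T}(Z_T)(\xi_{[0,t]})=\int_0^t c_\tau(\xi_\tau)\,d\tau+\varsigma^{\xi_{[0,t]}}_{t,r}\Big(I^{\xi_t}_{t,r}(c)+\varrho_{r,T}\big(I^{X^{t,\xi_t}_r}_{r,T}(c)+f(X^{t,\xi_t}_T)\big)\Big), \] where the argument of $\varsigma^{\xi_{[0,t]}}_{t,r}$ is the random variable on $(\Xi^{\xi_t}_{t,r},P^{\xi_t}_{t,r})$ obtained by evaluating $\int_t^r c_\tau(X_\tau)\,d\tau+\varrho_{r,T}\big(\int_r^T c_\tau(X_\tau)\,d\tau+f(X_T)\big)$ along paths whose restriction to $[0,t]$ is $\xi_{[0,t]}$.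
   Context: Let $\mathcal X$ be a finite state space, $T>0$, and $\{X_t\}_{0\le t\le T}$ a continuous-time Markov chain with values in $\mathcal X$, starting at a fixed state $x_0$, with transition function $Q_{t,r}(y|x)=P(X_r=y\mid X_t=x)$. The transition rates $G_t(y|x)=\lim_{\tau\downarrow0}\frac1\tau[Q_{t,t+\tau}(y|x)-\delta_x(y)]$ are assumed to exist, be finite and be uniformly bounded over $t\in[0,T]$. For $0\le t<r\le T$ and $\xi\in\mathcal X$, $\Xi^{\xi}_{t,r}$ denotes the space of piecewise-constant right-continuous paths $[t,r]\to\mathcal X$ starting at $\xi$, $P^{\xi}_{t,r}$ the law on it of the chain started at $\xi$ at time $t$, $X^{t,\xi}=\{X^{t,\xi}_\tau\}$ a process with this law, and $\Xi_{0,t}=\bigcup_{\xi}\Xi^{\xi}_{0,t}$. $\{\mathcal F_t\}$ is the filtration generated by $X$, and $\mathcal Z_t$ is the space of bounded $\mathcal F_t$-measurable random variables, identified with measurable functionals of the path $\xi_{[0,t]}$. $\mathcal L_\infty([t,r]\times\mathcal X)$ is the space of measurable essentially bounded $c:[t,r]\times\mathcal X\to\mathbb R$, $\mathcal L_\infty(\mathcal X)$ the space of functions $\mathcal X\to\mathbb R$. For $c$ and $\xi_t\in\mathcal X$, $I^{\xi_t}_{t,r}(c)=\int_t^r c_\tau(X^{t,\xi_t}_\tau)\,d\tau$. A conditional risk measure is a mapping $\varrho_{t,T}:\mathcal Z_T\to\mathcal Z_t$; a dynamic risk measure is a family $\{\varrho_{t,T}\}_{t\in[0,T]}$. It is normalized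 if $\varrho_{t,T}(0)=0$; translation invariant if $\varrho_{t,T}(Z_t+Z_T)=Z_t+\varrho_{t,T}(Z_T)$ for all $Z_t\in\mathcal Z_t,Z_T\in\mathcal Z_T$. For a history $\xi_{[0,t]}$ and $r\in[t,T]$, $\varrho_{r,T}(Z_T)\mid\xi_{[0,t]}$ denotes $\varrho_{r,T}(Z_T)$ regarded as a function of the path on $[t,r]$ continuing $\xi_{[0,t]}$, with distribution induced by $P^{\xi_t}_{t,r}$; $\varrho_{t,T}(Z_T)(\xi_{[0,t]})$ is the value at the history. $U\preceq_{\rm st}V$ means $P(U>\eta)\le P(V>\eta)$ for all $\eta\in\mathbb R$. $\varrho$ is stochastically conditionally time-consistent if for all $0\le t\le r\le T$, all $\xi_{[0,t]}$ and all $Z_T,W_T\in\mathcal Z_T$, $\varrho_{r,T}(Z_T)\mid\xi_{[0,t]}\preceq_{\rm st}\varrho_{r,T}(W_T)\mid\xi_{[0,t]}$ implies $\varrho_{t,T}(Z_T)(\xi_{[0,t]})\le\varrho_{t,T}(W_T)(\xi_{[0,t]})$. *)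

From HB Require Import structures.
From mathcomp Require Import all_boot all_order all_algebra.
From mathcomp Require Import all_classical all_reals all_analysis.

Set Implicit Arguments.
Unset Strict Implicit.
Unset Printing Implicit Defensive.
Import Order.TTheory GRing.Theory Num.Theory.
Import numFieldNormedType.Exports.
Local Open Scope classical_set_scope.
Local Open Scope ring_scope.

Section Paths.
Variables (R : realType) (X : finType).

(* [w] is piecewise constant and right-continuous on every compact interval
   [a,b]: there is a finite set J of jump times such that w is constant on
   every [u,v] ⊆ [a,b] with no jump time in ]u,v]. *)
Definition pcrc (w : R -> X) : Prop :=
  forall a b : R, exists J : seq R, forall u v : R,
    a <= u -> u <= v -> v <= b ->
    (forall j, j \in J -> ~ (u < j /\ j <= v)) -> w u = w v.

End Paths.

(* The parameter x0 (the initial state of the chain) only provides the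
   point (constant path x0) required by mathcomp-analysis' measurable types. *)
Record Path (R : realType) (X : finType) (x0 : X) := MkPath {
  pth :> R -> X ;
  pth_pcrc : pcrc pth }.
Arguments Path : clear implicits.
Arguments MkPath {R X x0} pth pth_pcrc.

Section PathStructure.
Variables (R : realType) (X : finType) (x0 : X).

Lemma pcrc_cst : pcrc (fun _ : R => x0).
Proof. by move=> a b; exists [::]. Qed.

HB.instance Definition _ := gen_eqMixin (Path R X x0).
HB.instance Definition _ := gen_choiceMixin (Path R X x0).
HB.instance Definition _ := isPointed.Build (Path R X x0) (MkPath (fun _ : R => x0) (@pcrc_cst)).

Definition coord_gen (a b : R) : set (set (Path R X x0)) :=
  [set A | exists (s : R) (x : X), a <= s <= b /\ A = [set w : Path R X x0 | w s = x]].

Definition Fsig (a b : R) : set (set (Path R X x0)) := <<s coord_gen a b >>.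

Definition cyl_gen : set (set (Path R X x0)) :=
  [set A | exists (s : R) (x : X), A = [set w : Path R X x0 | w s = x]].

End PathStructure.
Arguments coord_gen {R X} x0 a b.
Arguments Fsig {R X} x0 a b.
Arguments cyl_gen : clear implicits.

Definition PathM (R : realType) (X : finType) (x0 : X) :=
  g_sigma_algebraType (cyl_gen R X x0).

Arguments PathM : clear implicits.

Section Defs.
Variables (R : realType) (X : finType) (x0 : X).
Local Notation Path := (Path R X x0).

Definition concat_fun (t : R) (xi w : Path) : R -> X :=
  fun s => if s < t then xi s else w s.

Lemma concat_pcrc (t : R) (xi w : Path) : pcrc (concat_fun t xi w).
Proof.
move=> a b.
have [J1 H1] := pth_pcrc xi a b; have [J2 H2] := pth_pcrc w a b.
exists (t :: J1 ++ J2) => u v au uv vb nJ; rewrite /concat_fun.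
have nJ1 j : j \in J1 -> ~ (u < j /\ j <= v).
  by move=> jJ; apply: nJ; rewrite inE mem_cat jJ orbT.
have nJ2 j : j \in J2 -> ~ (u < j /\ j <= v).
  by move=> jJ; apply: nJ; rewrite inE mem_cat jJ !orbT.
have nt : ~ (u < t /\ t <= v) by apply: nJ; rewrite inE eqxx.
have [vt|vt] := ltP v t.
  by rewrite (le_lt_trans uv vt); exact: H1.
have [ut|ut] := ltP u t; first by exfalso; apply: nt.
exact: H2.
Qed.

Definition concat (t : R) (xi w : Path) : Path := MkPath (concat_fun t xi w) (concat_pcrc t xi w).

Definition Icost (c : R -> X -> R) (a b : R) (w : Path) : R :=
  (\int[lebesgue_measure]_(tau in `[a, b]) c tau (w tau))%R.

Definition Zspace (t : R) (Z : Path -> R) : Prop :=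
  (forall B : set R, measurable B -> Fsig x0 0 t (Z @^-1` B)) /\
  (exists M : R, forall w, `|Z w| <= M).

Definition Linf_cost (T : R) (c : R -> X -> R) : Prop :=
  forall x : X, measurable_fun `[0, T] (fun tau => c tau x) /\
    exists M : R, {ae lebesgue_measure, forall tau : R, 0 <= tau <= T -> `|c tau x| <= M}.

(* the transition function Q (Q t r x y = Q_{t,r}(y|x)) has transition rates
   G_t(y|x), existing, finite and uniformly bounded over t *)
Definition has_bounded_rates (T : R) (Q : R -> R -> X -> X -> R) : Prop :=
  exists (G : R -> X -> X -> R) (M : R), forall t x y, 0 <= t < T ->
    ((fun tau => (Q t (t + tau) x y - (x == y)%:R) / tau) @ 0^'+ --> G t x y)
    /\ `|G t x y| <= M.

Fixpoint fdd_prod (Q : R -> R -> X -> X -> R) (p : R * X) (ss : seq (R * X)) : R :=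
  if ss is q :: ss' then Q p.1 q.1 p.2 q.2 * fdd_prod Q q ss' else 1.

Definition chain_law (Q : R -> R -> X -> X -> R) (t r : R) (x : X)
    (P : probability (PathM R X x0) R) : Prop :=
  forall ss : seq (R * X),
    sorted (fun p q : R * X => p.1 < q.1) ((t, x) :: ss) ->
    (forall p, p \in ss -> p.1 <= r) ->
    P [set w : PathM R X x0 | w t = x /\ forall p, p \in ss -> w p.1 = p.2]
      = (fdd_prod Q (t, x) ss)%:E.

Definition dynamic_risk_measure (T : R) (rho : R -> (Path -> R) -> (Path -> R)) :=
  forall t Z, 0 <= t <= T -> Zspace T Z -> Zspace t (rho t Z).

Definition normalized (T : R) (rho : R -> (Path -> R) -> (Path -> R)) :=
  forall t, 0 <= t <= T -> rho t (fun _ => 0) = (fun _ => 0).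

Definition translation_invariant (T : R) (rho : R -> (Path -> R) -> (Path -> R)) :=
  forall t Zt ZT, 0 <= t <= T -> Zspace t Zt -> Zspace T ZT ->
    rho t (fun w => Zt w + ZT w) = (fun w => Zt w + rho t ZT w).

Definition st_le (P : probability (PathM R X x0) R) (U V : Path -> R) :=
  forall eta : R,
    (P [set w | (eta < U w)%R] <= P [set w | (eta < V w)%R])%E.

(* rho_{r,T}(Z) | xi_{[0,t]} : the function of the path on [t,r] continuing xi,
   under the law P^{xi_t}_{t,r} *)
Definition cond_given (rho : R -> (Path -> R) -> (Path -> R)) (t r : R)
    (xi : Path) (Z : Path -> R) : Path -> R :=
  fun w => rho r Z (concat t xi w).

Definition stoch_cond_time_consistent (T : R)
    (P : R -> R -> X -> probability (PathM R X x0) R)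
    (rho : R -> (Path -> R) -> (Path -> R)) :=
  forall t r (xi : Path) Z W, 0 <= t -> t <= r -> r <= T ->
    Zspace T Z -> Zspace T W ->
    st_le (P t r (xi t)) (cond_given rho t r xi Z) (cond_given rho t r xi W) ->
    rho t Z xi <= rho t W xi.

Definition Linf_path (t r : R) (P : probability (PathM R X x0) R) (V : Path -> R) :=
  (forall B : set R, measurable B -> Fsig x0 t r (V @^-1` B)) /\
  exists M : R, {ae P, forall w : PathM R X x0, `|V w| <= M}.

Definition law_invariant (t r : R) (P : probability (PathM R X x0) R)
    (vs : (Path -> R) -> R) :=
  forall V W, Linf_path t r P V -> Linf_path t r P W ->
    (forall B : set R, measurable B -> P (V @^-1` B) = P (W @^-1` B)) ->
    vs V = vs W.

End Defs.

From HB Require Import structures.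
From mathcomp Require Import all_boot all_order all_algebra.
From mathcomp Require Import all_classical all_reals all_analysis.
From mathcomp Require Import measurable_realfun lra.
Import Order.TTheory GRing.Theory Num.Theory.
Import numFieldNormedType.Exports.
Set Implicit Arguments.
Unset Strict Implicit.
Unset Printing Implicit Defensive.
Local Open Scope classical_set_scope.
Local Open Scope ring_scope.

(* Write Z = \int_0^T c + f(X_T). By translation invariance, the conditional
   risk rho_{r,T}(Z) along a continuation w of xi is the past cost
   \int_0^t c(xi) plus U(w) := \int_t^r c(w) + rho_{r,T}(\int_r^T c + f(X_T))(w).
   Stochastic time consistency, used in both directions against a suitable
   translate, shows that rho_{t,T}(Z)(xi) - \int_0^t c(xi) depends only on the
   law of U under P^{xi_t}_{t,r}; this defines the law invariant functional.
   The analytic content is that the path costs are bounded F_t-measurable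
   random variables: along a piecewise constant path the integrand is
   piecewise constant in time, and the cost is the limit (by dominated
   convergence) of costs of the path read on finite grids, which depend on
   finitely many coordinates only. *)

Section PathMeasurability.
Variables (R : realType) (X : finType) (x0 : X).
Local Notation Path := (Path R X x0).
Local Notation PS a b := (g_sigma_algebraType (coord_gen x0 a b)).

Lemma Fsig_measurable_funP (a b : R) (F : Path -> R) :
  (forall B, measurable B -> Fsig x0 a b (F @^-1` B)) <->
  measurable_fun [set: PS a b] (F : PS a b -> R).
Proof.
split=> [HF _ B mB|mF B mB]; first by rewrite setTI; exact: HF.
by have := mF measurableT B mB; rewrite setTI.
Qed.

(* The preimages are finite unions of cylinders [coords w = u]. *)
Lemma measurable_fun_fincoord (a b : R) (S : seq R) (F : Path -> R) :
  {in S, forall s, a <= s <= b} ->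
  (forall w w' : Path, {in S, forall s, w s = w' s} -> F w = F w') ->
  measurable_fun [set: PS a b] (F : PS a b -> R).
Proof.
move=> Sab HF _ B mB; rewrite setTI.
pose coords (w : Path) := [ffun i : 'I_(size S) => w (nth 0 S i)].
have -> : F @^-1` B = \bigcup_(u in [set u | exists2 w, coords w = u & B (F w)])
                        [set w : PS a b | coords w = u].
  apply/seteqP; split=> [w Bw|w [_ [w' <- Bw'] /= eqw]]; first by exists (coords w) => //; exists w.
  rewrite /preimage /= (HF w w') // => s sS.
  have iS : (index s S < size S)%N by rewrite index_mem.
  by have /ffunP/(_ (Ordinal iS)) := eqw; rewrite !ffunE /= nth_index.
apply: fin_bigcup_measurable; first exact: finite_finset.
move=> u _; have -> : [set w : PS a b | coords w = u] =
    \bigcap_(i in [set: 'I_(size S)]) [set w : PS a b | w (nth 0 S i) = u i].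
  apply/seteqP; split=> [w <- i _|w wu]; first by rewrite ffunE.
  by apply/ffunP => i; rewrite ffunE; exact: wu.
apply: fin_bigcap_measurable; first exact: finite_finset.
move=> i _; apply: sub_gen_smallest; exists (nth 0 S i), (u i); split => //.
by apply: Sab; exact: mem_nth.
Qed.

End PathMeasurability.

Section PiecewiseConstant.
Variables (R : realType) (X : finType).

Lemma gap_from_seq (tau : R) (J : seq R) :
  exists2 d : R, 0 < d & forall j, j \in J -> j != tau -> d <= `|j - tau|.
Proof.
elim: J => [|j J [d dp Hd]]; first by exists 1.
have [->|jt] := eqVneq j tau.
  by exists d => // k; rewrite inE => /orP[/eqP->|/Hd//]; rewrite eqxx.
exists (Num.min d `|j - tau|); first by rewrite lt_min dp normr_gt0 subr_eq0 jt.
move=> k; rewrite inE => /orP[/eqP->|kJ kt]; first by rewrite ge_min lexx orbT.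
by rewrite ge_min Hd.
Qed.

Definition piecewise_locally_constant (A B : R) (p : R -> X) :=
  exists J : seq R, forall tau, A < tau < B -> tau \notin J ->
    \forall y \near tau, p y = p tau.

Lemma pcrc_piecewise_locally_constant (A B : R) (p : R -> X) :
  pcrc p -> piecewise_locally_constant A B p.
Proof.
move=> /(_ A B) [J HJ]; exists J => tau /andP[Atau tauB] tauJ.
have [d dp Hd] := gap_from_seq tau J.
pose e := Num.min d (Num.min (tau - A) (B - tau)).
have e_gt0 : 0 < e by rewrite !lt_min dp !subr_gt0 Atau tauB.
apply/nbhs_ballP; exists e => // y; rewrite /ball /= distrC !lt_min.
move=> /andP[yd /andP[yA yB]].
move: yd yA yB; rewrite !ltr_norml => /andP[? ?] /andP[? ?] /andP[? ?].
have far j : j \in J -> d <= `|j - tau| by move=> jJ; apply: Hd => //; apply: contraNneq tauJ => <-.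
have [ytau|tauy] := leP y tau.
  apply: HJ; try lra.
  by move=> j /far + [? ?]; rewrite ler0_norm; lra.
apply/esym/HJ; try lra.
by move=> j /far + [? ?]; rewrite ger0_norm; lra.
Qed.

Lemma pcrc_right_const (p : R -> X) (t : R) :
  pcrc p -> exists2 d : R, 0 < d & forall y, t <= y < t + d -> p y = p t.
Proof.
move=> /(_ t (t + 1)) [J HJ]; have [d0 d0_gt0 Hd0] := gap_from_seq t J.
exists (Num.min d0 1) => [|y /andP[ty]]; first by rewrite lt_min d0_gt0 ltr01.
rewrite -ltrBlDl lt_min => /andP[yd0 y1]; apply/esym/HJ; try lra.
move=> j jJ [tj jy]; have := Hd0 j jJ (negbT (gt_eqF tj)).
by rewrite ger0_norm; lra.
Qed.

(* Off a finite set, a level set of [p] coincides with its interior. *)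
Lemma measurable_level_set (A B : R) (p : R -> X) (x : X) :
  piecewise_locally_constant A B p ->
  measurable [set t : R | A <= t <= B /\ p t = x].
Proof.
move=> [J HJ].
set L := [set t | _ /\ _].
have -> : L = (interior (p @^-1` [set x]) `&` `]A, B[) `|` (L `&` [set` A :: B :: J]).
  apply/seteqP; split=> [t Lt|t [[/interior_subset ptx]|[]//]]; last first.
    by rewrite /= in_itv /= => /andP[At tB]; split => //; rewrite !ltW.
  have [tS|tS] := boolP (t \in A :: B :: J); first by right.
  left; case: Lt => /andP[At tB] ptx.
  move: tS; rewrite !inE !negb_or => /and3P[tA tB' tJ].
  have At' : A < t by rewrite lt_neqAle eq_sym tA.
  have tB'' : t < B by rewrite lt_neqAle tB'.
  split; last by rewrite /= in_itv /= At' tB''.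
  by rewrite /interior -ptx; exact: HJ (introT andP (conj At' tB'')) tJ.
apply: measurableU; last apply: countable_measurable.
- by apply: measurableI; [apply: open_measurable; exact: open_interior|exact: measurable_itv].
- by move=> t; exact: measurable_set1.
- by apply/finite_set_countable/(sub_finite_set _ (finite_seq _)); exact: subIsetr.
Qed.

Lemma measurable_fun_along (c : R -> X -> R) (A B : R) (p : R -> X) :
  (forall x, measurable_fun `[A, B] (c^~ x)) -> piecewise_locally_constant A B p ->
  measurable_fun `[A, B] (fun t => c t (p t)).
Proof.
move=> mc pplc.
pose S x := [set t : R | A <= t <= B /\ p t = x].
apply: (@eq_measurable_fun _ _ _ _ _ (fun t => \sum_(x <- enum X) c t x * \1_(S x) t)).
  move=> t; rewrite inE /= in_itv /= => tAB.
  rewrite big_enum (bigD1 (p t)) //= big1 ?addr0; first by rewrite indicE mem_set ?mulr1.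
  by move=> x xp; rewrite indicE memNset ?mulr0 //= => -[_ ptx]; rewrite ptx eqxx in xp.
apply: measurable_sum => x; apply: measurable_funM; first exact: mc.
by apply: measurable_indic; exact: measurable_level_set.
Qed.

End PiecewiseConstant.

Section PathIntegrals.
Variables (R : realType) (X : finType) (x0 : X).
Local Notation mu := (@lebesgue_measure R).
Local Notation Path := (Path R X x0).

Lemma Rintegral_itvcc_split (f : R -> R) (a b e : R) : a <= b -> b <= e ->
  mu.-integrable `[a, e] (EFin \o f) ->
  \int[mu]_(t in `[a, e]) f t = \int[mu]_(t in `[a, b]) f t + \int[mu]_(t in `[b, e]) f t.
Proof.
move=> ab be If.
have := @Rintegral_itvB _ f (BLeft a) (BRight e) b If.
rewrite !bnd_simp => /(_ ab be) H.
rewrite -(@Rintegral_itv_obnd_cbnd _ b (BRight e) f); last first.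
  by apply: integrableS If => //; apply: subset_itv; rewrite bnd_simp.
by rewrite -H addrC subrK.
Qed.

Variables (T : R) (c : R -> X -> R).
Hypothesis Hc : Linf_cost T c.

Definition cost_env (tau : R) := \sum_(x : X) `|c tau x|.

Lemma cost_le_env tau x : `|c tau x| <= cost_env tau.
Proof. by rewrite /cost_env (bigD1 x) //= lerDl sumr_ge0. Qed.

Lemma cost_env_ge0 tau : 0 <= cost_env tau.
Proof. exact: sumr_ge0. Qed.

Lemma measurable_cost (A B : R) x : 0 <= A -> B <= T -> measurable_fun `[A, B] (c^~ x).
Proof.
move=> A0 BT; apply: measurable_funS (proj1 (Hc x)) => //.
by apply: subset_itv; rewrite bnd_simp.
Qed.

Lemma integrable_cost x : mu.-integrable `[0, T] (EFin \o c^~ x).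
Proof.
have [mc [M HM]] := Hc x.
apply/integrableP; split; first exact/measurable_EFinP.
apply: (le_lt_trans (integral_le_bound (`|M|%:E) _ _ _ _)) => //.
- exact/measurable_EFinP.
- apply: filterS HM; first exact: (ae_filter_ringOfSetsType mu).
  move=> tau H; rewrite /= in_itv /= => /H.
  by rewrite lee_fin => /le_trans; apply; rewrite ler_norm.
- rewrite [X in (_ * X < _)%E](_ : _ = mu `[0, T]) // lebesgue_measure_itv /= lte_fin.
  by case: ifP => _; rewrite -?EFinD ?mule0 ?ltry // -EFinM ltry.
Qed.

Lemma integrable_cost_env (A B : R) : 0 <= A -> B <= T ->
  mu.-integrable `[A, B] (EFin \o cost_env).
Proof.
move=> A0 BT; apply: (@integrableS _ _ _ mu `[0, T]) => //.
  by apply: subset_itv; rewrite bnd_simp.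
have -> : EFin \o cost_env = fun tau => (\sum_(x <- enum X) (`|c tau x|)%:E)%E.
  by apply/funext => tau; rewrite sumEFin /cost_env /= big_enum.
apply: integrable_sum => // x _; exact: integrable_norm (integrable_cost x).
Qed.

Lemma integrable_cost_along (p : R -> X) (A B : R) : 0 <= A -> B <= T ->
  piecewise_locally_constant A B p ->
  mu.-integrable `[A, B] (EFin \o (fun t => c t (p t))).
Proof.
move=> A0 BT pplc.
apply: (@le_integrable _ _ _ mu _ (measurable_itv _) _ (EFin \o cost_env)).
- apply/measurable_EFinP; apply: measurable_fun_along pplc => x.
  exact: measurable_cost.
- by move=> t _; rewrite /= lee_fin (ger0_norm (cost_env_ge0 t)) cost_le_env.
- exact: integrable_cost_env.
Qed.

Lemma integrable_cost_path (w : Path) (A B : R) : 0 <= A -> B <= T ->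
  mu.-integrable `[A, B] (EFin \o (fun t => c t (w t))).
Proof.
move=> A0 BT; apply: integrable_cost_along => //.
exact: pcrc_piecewise_locally_constant (pth_pcrc w).
Qed.

Lemma Icost_split (w : Path) (a b e : R) : 0 <= a -> a <= b -> b <= e -> e <= T ->
  Icost c a e w = Icost c a b w + Icost c b e w.
Proof.
move=> a0 ab be eT.
exact: Rintegral_itvcc_split ab be (integrable_cost_path w a0 eT).
Qed.

Lemma eq_Icost (w w' : Path) (a b : R) : 0 <= a -> b <= T ->
  (forall s, a <= s < b -> w s = w' s) -> Icost c a b w = Icost c a b w'.
Proof.
move=> a0 bT ww'; rewrite /Icost.
have sub : `[a, b[ `<=` `[a, b] by apply: subset_itv; rewrite bnd_simp.
rewrite -!Rintegral_itv_bndo_bndc.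
- by apply: eq_Rintegral => s; rewrite inE /= in_itv /= => /ww' ->.
- exact: integrableS (integrable_cost_path w' a0 bT).
- exact: integrableS (integrable_cost_path w a0 bT).
Qed.

Lemma Icost_concat (t r : R) (xi w : Path) : 0 <= t -> t <= r -> r <= T ->
  Icost c 0 r (concat t xi w) = Icost c 0 t xi + Icost c t r w.
Proof.
move=> t0 tr rT; rewrite (@Icost_split _ 0 t r) //.
congr (_ + _); apply: eq_Icost => //.
- exact: le_trans tr rT.
- by move=> s /andP[_ st]; rewrite /= /concat_fun st.
- by move=> s /andP[ts _]; rewrite /= /concat_fun ltNge ts.
Qed.

Lemma Icost_bounded (a b : R) : 0 <= a -> b <= T ->
  exists M, forall w : Path, `|Icost c a b w| <= M.
Proof.
move=> a0 bT; exists (\int[mu]_(t in `[a, b]) cost_env t) => w.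
apply: le_trans (le_normr_Rintegral _ (integrable_cost_path w a0 bT)) _ => //.
apply: le_Rintegral => //.
- exact: integrable_norm (integrable_cost_path w a0 bT).
- exact: integrable_cost_env.
- by move=> t _; exact: cost_le_env.
Qed.

End PathIntegrals.

Section GridApproximation.
Variables (R : realType) (X : finType) (x0 : X).
Local Notation mu := (@lebesgue_measure R).
Local Notation Path := (Path R X x0).
Variables (a b : R).
Hypothesis ab : a < b.

Definition mesh (n : nat) : R := (b - a) / n.+1%:R.
Definition grid (n : nat) : seq R := [seq a + i%:R * mesh n | i <- iota 0 n.+2].
Definition grid_index (n : nat) (t : R) : int := Num.ceil ((t - a) / mesh n).
Definition grid_ceil (n : nat) (t : R) : R := a + (grid_index n t)%:~R * mesh n.

Lemma mesh_gt0 n : 0 < mesh n.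
Proof. by rewrite divr_gt0 // ?subr_gt0 // ltr0n. Qed.

Lemma meshE n : mesh n * n.+1%:R = b - a.
Proof. by rewrite mulfVK // pnatr_eq0. Qed.

Lemma near_mesh_lt (d : R) : 0 < d -> \forall n \near \oo, mesh n < d.
Proof.
move=> d_gt0; set N := Num.ceil ((b - a) / d).
have N_ge0 : 0 <= N.
  by rewrite ceil_ge0 (@lt_le_trans _ _ 0) // divr_ge0 ?subr_ge0 ?(ltW ab) ?(ltW d_gt0).
exists `|N|%N => // n /= Nn.
rewrite ltr_pdivrMr ?ltr0n // mulrC -ltr_pdivrMr //.
apply: le_lt_trans (ceil_ge _) _; rewrite -/N -(gez0_abs N_ge0).
by rewrite [X in X < _](_ : _ = (`|N|%N)%:R) // ltr_nat ltnS.
Qed.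

Lemma mem_grid_itv n s : s \in grid n -> a <= s <= b.
Proof.
case/mapP => i; rewrite mem_iota add0n => /andP[_ ilt] ->.
have := mesh_gt0 n; have := meshE n.
have : i%:R <= n.+1%:R :> R by rewrite ler_nat -ltnS.
have : 0 <= i%:R :> R by [].
by move=> *; apply/andP; split; nra.
Qed.

Lemma grid_ceil_itv n t : t <= grid_ceil n t < t + mesh n.
Proof.
have h_gt0 := mesh_gt0 n; have /andP[lo hi] := ceil_itv ((t - a) / mesh n).
rewrite /grid_ceil /grid_index; set m : R := (Num.ceil _)%:~R.
move: lo hi; rewrite intrB -/m ltr_pdivlMr // ler_pdivrMr // => lo hi.
apply/andP; split; nra.
Qed.

Lemma grid_ceil_in_grid n t : a <= t <= b -> grid_ceil n t \in grid n.
Proof.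
move=> /andP[a_le_t t_le_b]; have h_gt0 := mesh_gt0 n.
have m_ge0 : 0 <= grid_index n t.
  by rewrite ceil_ge0 (@lt_le_trans _ _ 0) // divr_ge0 ?subr_ge0 // ltW.
have m_le : grid_index n t <= Posz n.+1.
  by rewrite ceil_le_int ler_pdivrMr // mulrC meshE; lra.
apply/mapP; exists `|grid_index n t|%N.
  by rewrite mem_iota add0n /= -ltz_nat gez0_abs // ltzS.
by rewrite /grid_ceil natr_absz ger0_norm.
Qed.

Lemma grid_index_off_grid n t : a <= t <= b -> t \notin grid n ->
  ((grid_index n t - 1)%:~R < (t - a) / mesh n < (grid_index n t)%:~R).
Proof.
move=> tab tg; have /andP[lo hi] := ceil_itv ((t - a) / mesh n).
rewrite lo /= lt_neqAle hi andbT; apply: contraNneq tg => E.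
by rewrite -[t](_ : grid_ceil n t = t) ?grid_ceil_in_grid // /grid_ceil -E
  mulfVK ?gt_eqF ?mesh_gt0 // addrC subrK.
Qed.

Lemma near_grid_index n tau : a <= tau <= b -> tau \notin grid n ->
  \forall y \near tau, grid_index n y = grid_index n tau.
Proof.
move=> tab tg; have /andP[lo hi] := grid_index_off_grid tab tg.
have cont : (fun y => (y - a) / mesh n) @ tau --> (tau - a) / mesh n.
  by apply: (@cvgMr_tmp _ _ _ _ (fun y => y - a)); exact: cvgB cvg_id (cvg_cst a).
near=> y; apply: ceil_def; apply/andP; split; last apply: ltW; near: y.
- exact: cvgr_gt cont _ lo.
- exact: cvgr_lt cont _ hi.
Unshelve. all: by end_near.
Qed.

Lemma piecewise_locally_constant_grid_ceil (w : Path) n :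
  piecewise_locally_constant a b (fun t => w (grid_ceil n t)).
Proof.
exists (grid n) => tau /andP[atau taub] tg.
apply: filterS (near_grid_index (introT andP (conj (ltW atau) (ltW taub))) tg).
by move=> y; rewrite /grid_ceil => ->.
Qed.

Lemma near_grid_ceil (w : Path) t : \forall n \near \oo, w (grid_ceil n t) = w t.
Proof.
have [d d_gt0 Hd] := pcrc_right_const t (pth_pcrc w).
apply: filterS (near_mesh_lt d_gt0) => n hd; apply: Hd.
by have /andP[? ?] := grid_ceil_itv n t; apply/andP; split; lra.
Qed.

Variables (T : R) (c : R -> X -> R).
Hypothesis Hc : Linf_cost T c.

Lemma Icost_grid_ceil_cvg (w : Path) : 0 <= a -> b <= T ->
  (\int[mu]_(t in `[a, b[) c t (w (grid_ceil n t))) @[n --> \oo] --> Icost c a b w.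
Proof.
move=> a0 bT.
have sub : `[a, b[%classic `<=` `[a, b]%classic by apply: subset_itv; rewrite bnd_simp.
have mc x : measurable_fun `[a, b] (c^~ x) by exact: measurable_cost.
have mfn n : measurable_fun `[a, b[ (EFin \o (fun t => c t (w (grid_ceil n t)))).
  apply/measurable_EFinP; apply: measurable_funS sub _ => //.
  exact: measurable_fun_along mc (piecewise_locally_constant_grid_ceil w n).
have mf : measurable_fun `[a, b[ (EFin \o (fun t => c t (w t))).
  apply/measurable_EFinP; apply: measurable_funS sub _ => //.
  exact: measurable_fun_along mc (pcrc_piecewise_locally_constant a b (pth_pcrc w)).
have ig : mu.-integrable `[a, b[ (EFin \o cost_env c).
  by apply: integrableS (integrable_cost_env Hc a0 bT).
have ff : {ae mu, forall t, `[a, b[%classic t ->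
    (fun n => (EFin \o (fun t => c t (w (grid_ceil n t)))) t) @ \oo -->
      (EFin \o (fun t => c t (w t))) t}.
  apply: aeW => t _; apply: cvg_near_cst.
  by apply: filterS (near_grid_ceil w t) => n /= ->.
have fg : {ae mu, forall t n, `[a, b[%classic t ->
    (`|(EFin \o (fun t => c t (w (grid_ceil n t)))) t| <= (EFin \o cost_env c) t)%E}.
  by apply: aeW => t n _; rewrite /= lee_fin cost_le_env.
have [If _ H] := @dominated_convergence _ _ _ mu _ (measurable_itv _) _ _ _ mfn mf ff ig fg.
rewrite /Icost -(Rintegral_itv_bndo_bndc If) /Rintegral.
have fin : (\int[mu]_(t in `[a, b[) (EFin \o (fun t => c t (w t))) t)%E \is a fin_num.
  exact: integrable_fin_num.
by rewrite -(fineK fin) in H; exact: fine_cvg H.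
Qed.

End GridApproximation.

Section RandomVariables.
Variables (R : realType) (X : finType) (x0 : X).
Local Notation mu := (@lebesgue_measure R).
Local Notation Path := (Path R X x0).
Local Notation PS a b := (g_sigma_algebraType (coord_gen x0 a b)).

Lemma Zspace_cst (s k : R) : Zspace s (fun _ : Path => k).
Proof.
split; last by exists `|k|.
by apply/Fsig_measurable_funP; exact: measurable_cst.
Qed.

Lemma Zspace_add (s : R) (Z1 Z2 : Path -> R) : Zspace s Z1 -> Zspace s Z2 ->
  Zspace s (fun w => Z1 w + Z2 w).
Proof.
move=> [/Fsig_measurable_funP m1 [M1 b1]] [/Fsig_measurable_funP m2 [M2 b2]].
split; first by apply/Fsig_measurable_funP; exact: measurable_funD.
by exists (M1 + M2) => w; apply: le_trans (ler_normD _ _) _; exact: lerD.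
Qed.

Lemma Zspace_coord (s : R) (f : X -> R) : 0 <= s -> Zspace s (fun w : Path => f (w s)).
Proof.
move=> s0; split.
  apply/Fsig_measurable_funP; apply: (@measurable_fun_fincoord _ _ _ _ _ [:: s]).
    by move=> y; rewrite inE => /eqP ->; rewrite s0 lexx.
  by move=> w w' ww'; rewrite ww' // inE.
by exists (\sum_(x : X) `|f x|) => w; rewrite (bigD1 (w s)) //= lerDl sumr_ge0.
Qed.

Lemma Zspace_Icost (T : R) (c : R -> X -> R) (s a b : R) : Linf_cost T c ->
  0 <= a -> a <= b -> b <= s -> b <= T -> Zspace s (fun w : Path => Icost c a b w).
Proof.
move=> Hc a0 ab bs bT; split; last exact: Icost_bounded.
apply/Fsig_measurable_funP; have [<-|ab'] := eqVneq a b.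
  rewrite (_ : (fun w => _) = fun=> 0); first exact: measurable_cst.
  by apply/funext => w; rewrite /Icost set_itv1 Rintegral_set1.
have lt_ab : a < b by rewrite lt_neqAle ab' ab.
apply: (@measurable_fun_cvg _ _ _ _
  (fun n (w : PS 0 s) => \int[mu]_(t in `[a, b[) c t (w (grid_ceil a b n t)))).
  move=> n; apply: (@measurable_fun_fincoord _ _ _ _ _ (grid a b n)).
    move=> y /(mem_grid_itv lt_ab) /andP[ay yb].
    by rewrite (le_trans a0 ay) (le_trans yb bs).
  move=> w w' ww'; apply: eq_Rintegral => t; rewrite inE /= in_itv /= => /andP[a_le_t t_lt_b].
  by rewrite ww' // grid_ceil_in_grid // a_le_t ltW.
by move=> w _; exact: Icost_grid_ceil_cvg.
Qed.

End RandomVariables.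

Section LawExtension.
Variables (R : realType) (X : finType) (x0 : X).
Local Notation Path := (Path R X x0).
Variable P : probability (PathM R X x0) R.

Definition same_law (V W : Path -> R) :=
  forall B : set R, measurable B -> P (V @^-1` B) = P (W @^-1` B).

Lemma st_le_shift (V W : Path -> R) (K : R) :
  same_law V W -> st_le P (fun w => K + V w) (fun w => K + W w).
Proof.
move=> VW eta.
have E (U : Path -> R) : [set w | eta < K + U w] = U @^-1` `]eta - K, +oo[.
  by apply/seteqP; split => w /=; rewrite in_itv /= andbT ltrBlDr addrC.
by rewrite !E VW //; exact: measurable_itv.
Qed.

Variables (I : Type) (D : I -> Prop) (F : I -> Path -> R) (v : I -> R).
Hypothesis v_law : forall i j, D i -> D j -> same_law (F i) (F j) -> v i = v j.

(* Junk value 0 on the laws not attained in the family [F]. *)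
Definition law_extension (V : Path -> R) : R :=
  if pselect (exists i, D i /\ same_law (F i) V) is left H then v (projT1 (cid H)) else 0.

Lemma law_extensionE i V : D i -> same_law (F i) V -> law_extension V = v i.
Proof.
move=> Di FiV; rewrite /law_extension; case: pselect => [H|[]]; last by exists i.
case: cid => j /= [Dj FjV]; apply: v_law => // B mB.
by rewrite FjV // FiV.
Qed.

Lemma law_extension_same_law V W : same_law V W -> law_extension V = law_extension W.
Proof.
move=> VW; have [[i [Di FiV]]|noV] := pselect (exists i, D i /\ same_law (F i) V).
  rewrite !(law_extensionE Di) // => B mB; by rewrite FiV // VW.
rewrite /law_extension; case: pselect => // _; case: pselect => // -[i [Di FiW]].
by case: noV; exists i; split => // B mB; rewrite FiW // VW.
Qed.

End LawExtension.

Section TimeConsistency.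
Variables (R : realType) (X : finType) (x0 : X) (T : R).
Local Notation Path := (Path R X x0).
Variables (P : R -> R -> X -> probability (PathM R X x0) R)
  (rho : R -> (Path -> R) -> (Path -> R)).
Hypotheses (htc : stoch_cond_time_consistent T P rho)
  (hti : translation_invariant T rho).
Variables (t r : R) (xi : Path).
Hypotheses (t0 : 0 <= t) (tr : t <= r) (rT : r <= T).

Let tT : t <= T. Proof. exact: le_trans tr rT. Qed.
Let r0 : 0 <= r. Proof. exact: le_trans t0 tr. Qed.

Lemma time_consistent_shift (Z W U V : Path -> R) (K K' : R) :
  Zspace T Z -> Zspace T W ->
  cond_given rho t r xi Z = (fun w => K + U w) ->
  cond_given rho t r xi W = (fun w => K' + V w) ->
  same_law (P t r (xi t)) U V ->
  rho t Z xi - K = rho t W xi - K'.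
Proof.
move=> ZZ ZW condZ condW UV.
pose W' w := K - K' + W w.
have ZW' : Zspace T W' by apply: Zspace_add => //; exact: Zspace_cst.
have rhoW' s : 0 <= s <= T -> rho s W' = fun w => K - K' + rho s W w.
  by move=> sT; apply: hti => //; exact: Zspace_cst.
have condW' : cond_given rho t r xi W' = fun w => K + V w.
  apply/funext => w; rewrite /cond_given rhoW' ?r0 ?rT //.
  by have := congr1 (@^~ w) condW; rewrite /cond_given => ->; lra.
have : rho t Z xi = rho t W' xi.
  apply/le_anti/andP; split; apply: (@htc t r xi) => //; rewrite condZ condW';
    by apply: st_le_shift => B mB; rewrite UV.
by rewrite rhoW' ?t0 ?tT // => ->; lra.
Qed.

Definition cost_from (c : R -> X -> R) (f : X -> R) (a : R) (w : Path) : R :=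
  Icost c a T w + f (w T).

Definition cost_to_go (c : R -> X -> R) (f : X -> R) (w : Path) : R :=
  Icost c t r w + rho r (cost_from c f r) (concat t xi w).

Lemma Zspace_cost_from c f a : Linf_cost T c -> 0 <= a -> a <= T ->
  Zspace T (cost_from c f a).
Proof.
move=> Hc a0 aT; apply: Zspace_add; last exact: Zspace_coord (le_trans a0 aT).
exact: Zspace_Icost.
Qed.

Lemma cond_given_cost_from c f : Linf_cost T c ->
  cond_given rho t r xi (cost_from c f 0) = fun w => Icost c 0 t xi + cost_to_go c f w.
Proof.
move=> Hc; apply/funext => w.
have split0r : cost_from c f 0 = fun w => Icost c 0 r w + cost_from c f r w.
  by apply/funext => w'; rewrite /cost_from (Icost_split Hc w' (lexx 0) r0 rT (lexx T)) addrA.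
rewrite /cond_given split0r hti; first by rewrite (Icost_concat Hc) // addrA.
- by rewrite r0 rT.
- exact: Zspace_Icost.
- exact: Zspace_cost_from.
Qed.

Lemma law_determines_risk c f c' f' : Linf_cost T c -> Linf_cost T c' ->
  same_law (P t r (xi t)) (cost_to_go c f) (cost_to_go c' f') ->
  rho t (cost_from c f 0) xi - Icost c 0 t xi =
  rho t (cost_from c' f' 0) xi - Icost c' 0 t xi.
Proof.
move=> Hc Hc' same; apply: time_consistent_shift same.
- exact: Zspace_cost_from Hc (lexx 0) (le_trans r0 rT).
- exact: Zspace_cost_from Hc' (lexx 0) (le_trans r0 rT).
- exact: cond_given_cost_from.
- exact: cond_given_cost_from.
Qed.

End TimeConsistency.

Unset Implicit Arguments.

Theorem theorem4p1 (R : realType) (X : finType) (x0 : X) (T : R)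
    (Q : R -> R -> X -> X -> R)
    (P : R -> R -> X -> probability (PathM R X x0) R)
    (rho : R -> (Path R X x0 -> R) -> (Path R X x0 -> R)) :
  0 < T ->
  has_bounded_rates T Q ->
  (forall t r x, 0 <= t -> t <= r -> r <= T -> chain_law Q t r x (P t r x)) ->
  dynamic_risk_measure T rho ->
  stoch_cond_time_consistent T P rho ->
  normalized T rho ->
  translation_invariant T rho ->
  forall (t r : R), 0 <= t -> t <= r -> r <= T ->
  forall xi : Path R X x0,
  exists vs : (Path R X x0 -> R) -> R,
    law_invariant t r (P t r (xi t)) vs /\
    forall (c : R -> X -> R) (f : X -> R), Linf_cost T c ->
      rho t (fun w => Icost c 0 T w + f (w T)) xi
      = Icost c 0 t xi
        + vs (fun w => Icost c t r w
                       + rho r (fun w' => Icost c r T w' + f (w' T))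
                             (concat t xi w)).
Proof.
move=> _ _ _ _ htc _ hti t r t0 tr rT xi.
pose F (cf : (R -> X -> R) * (X -> R)) := cost_to_go T rho t r xi cf.1 cf.2.
pose v (cf : (R -> X -> R) * (X -> R)) :=
  rho t (cost_from T cf.1 cf.2 0) xi - Icost cf.1 0 t xi.
have v_law cf cf' : Linf_cost T cf.1 -> Linf_cost T cf'.1 ->
    same_law (P t r (xi t)) (F cf) (F cf') -> v cf = v cf'.
  exact: law_determines_risk.
exists (law_extension (P t r (xi t)) (fun cf => Linf_cost T cf.1) F v); split.
  by move=> V W _ _; exact: law_extension_same_law.
move=> c f Hc; rewrite (law_extensionE v_law (i := (c, f))) //.
by rewrite /v addrC subrK.
Qed.
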